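(* Let $n\ge0$ and let $\mathfrak g$ be a Leibniz algebra whose Frattini subalgebra $\Phi(\mathfrak g)$ is trivial. Then, up to isomorphism, there is only one $n$-Lie-stem Leibniz algebra that is $n$-Lie-isoclinic to $\mathfrak g$, namely $\mathfrak g/\mathcal Z_n^{\mathsf{Lie}}(\mathfrak g)$.
   Context: All Leibniz algebras are over a field $\mathbb{K}$ with $\frac12\in\mathbb{K}$. A Leibniz algebra is a vector space $\mathfrak g$ with a bilinear bracket $[-,-]$ satisfying $[x,[y,z]]=[[x,y],z]-[[x,z],y]$. For $x,y\in\mathfrak g$ put $[x,y]_{lie}=[x,y]+[y,x]$. For two-sided ideals $\mathfrak m,\mathfrak n$ of $\mathfrak g$, $[\mathfrak m,\mathfrak n]_{\mathsf{Lie}}$ denotes the two-sided ideal of $\mathfrak g$ generated by $\{[m,x]_{lie}: m\in\mathfrak m, x\in\mathfrak n\}$. Lower Lie-central series: $\gamma_1^{\mathsf{Lie}}(\mathfrak g)=\mathfrak g$, $\gamma_i^{\mathsf{Lie}}(\mathfrak g)=[\gamma_{i-1}^{\mathsf{Lie}}(\mathfrak g),\mathfrak g]_{\mathsf{Lie}}$ for $i\ge2$. Upper Lie-central series: $\mathcal Z_0^{\mathsf{Lie}}(\mathfrak g)=0$, $\mathcal Z_i^{\mathsf{Lie}}(\mathfrak g)=\{x\in\mathfrak g:[x,y]_{lie}\in\mathcal Z_{i-1}^{\mathsf{Lie}}(\mathfrak g)\ \text{for all } y\in\mathfrak g\}$ for $i\ge1$. A Leibniz algebra $\mathfrak g$ is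 an $n$-Lie-stem Leibniz algebra if $\mathcal Z_n^{\mathsf{Lie}}(\mathfrak g)\subseteq\gamma_{n+1}^{\mathsf{Lie}}(\mathfrak g)$. The Frattini subalgebra $\Phi(\mathfrak g)$ is the intersection of all maximal subalgebras of $\mathfrak g$. For $n\ge0$, Leibniz algebras $\mathfrak g_1,\mathfrak g_2$ are $n$-Lie-isoclinic, written $\mathfrak g_1\sim_n\mathfrak g_2$, if there exist Leibniz algebra isomorphisms $\eta:\mathfrak g_1/\mathcal Z_n^{\mathsf{Lie}}(\mathfrak g_1)\to\mathfrak g_2/\mathcal Z_n^{\mathsf{Lie}}(\mathfrak g_2)$ and $\xi:\gamma_{n+1}^{\mathsf{Lie}}(\mathfrak g_1)\to\gamma_{n+1}^{\mathsf{Lie}}(\mathfrak g_2)$ such that $\xi([\cdots[[x_1,x_2]_{lie},x_3]_{lie},\ldots,x_{n+1}]_{lie})=[\cdots[[y_1,y_2]_{lie},y_3]_{lie},\ldots,y_{n+1}]_{lie}$ whenever $x_i\in\mathfrak g_1$, $y_i\in\mathfrak g_2$ satisfy $\eta(x_i+\mathcal Z_n^{\mathsf{Lie}}(\mathfrak g_1))=y_i+\mathcal Z_n^{\mathsf{Lie}}(\mathfrak g_2)$ for $i=1,\ldots,n+1$. *)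

From HB Require Import structures.
From mathcomp Require Import all_boot all_order all_algebra.
Set Implicit Arguments. Unset Strict Implicit. Unset Printing Implicit Defensive.
Import GRing.Theory.
Local Open Scope ring_scope.

Record leibniz (K : fieldType) := Leibniz {
  lcarrier :> lmodType K;
  lbr : lcarrier -> lcarrier -> lcarrier;
  lbr_linl : forall (a : K) (x y z : lcarrier),
      lbr (a *: x + y) z = a *: lbr x z + lbr y z;
  lbr_linr : forall (a : K) (x y z : lcarrier),
      lbr z (a *: x + y) = a *: lbr z x + lbr z y;
  lbr_leibniz : forall x y z : lcarrier,
      lbr x (lbr y z) = lbr (lbr x y) z - lbr (lbr x z) y
}.

Section Defs.
Variable K : fieldType.

Definition lie (g : leibniz K) (x y : g) : g := lbr x y + lbr y x.

Definition subspace (g : leibniz K) (S : g -> Prop) :=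
  S 0 /\ forall (a : K) (x y : g), S x -> S y -> S (a *: x + y).

Definition subalgebra (g : leibniz K) (S : g -> Prop) :=
  subspace S /\ forall x y : g, S x -> S y -> S (lbr x y).

Definition ideal (g : leibniz K) (S : g -> Prop) :=
  subspace S /\ forall x y : g, S x -> S (lbr x y) /\ S (lbr y x).

Definition gen_ideal (g : leibniz K) (T : g -> Prop) : g -> Prop :=
  fun x => forall I : g -> Prop, ideal I -> (forall t, T t -> I t) -> I x.

Definition lie_comm (g : leibniz K) (M N : g -> Prop) : g -> Prop :=
  gen_ideal (fun z => exists m x, M m /\ N x /\ z = lie m x).

Unset Implicit Arguments.
(* gammaLie i = gamma_i^Lie(g) for i >= 1 (gammaLie 0 = gammaLie 1 = g) *)
Fixpoint gammaLie (g : leibniz K) (i : nat) {struct i} : g -> Prop :=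
  match i with
  | 0 => fun _ => True
  | 1 => fun _ => True
  | S j => @lie_comm g (gammaLie g j) (fun _ => True)
  end.

Fixpoint ZLie (g : leibniz K) (i : nat) {struct i} : g -> Prop :=
  match i with
  | 0 => fun x => x = 0
  | S j => fun x => forall y : g, ZLie g j (lie x y)
  end.

Set Implicit Arguments.
Definition Lie_stem (n : nat) (g : leibniz K) :=
  forall x : g, ZLie g n x -> gammaLie g n.+1 x.

Definition maximal_subalgebra (g : leibniz K) (M : g -> Prop) :=
  subalgebra M /\ (exists x, ~ M x) /\
  forall N : g -> Prop, subalgebra N -> (forall x, M x -> N x) ->
     (forall x, N x <-> M x) \/ (forall x, N x).

Definition Frattini (g : leibniz K) : g -> Prop :=
  fun x => forall M : g -> Prop, maximal_subalgebra M -> M x.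

Definition leib_hom (g h : leibniz K) (f : g -> h) :=
  (forall (a : K) (x y : g), f (a *: x + y) = a *: f x + f y) /\
  (forall x y : g, f (lbr x y) = lbr (f x) (f y)).

Definition leib_iso (g h : leibniz K) (f : g -> h) :=
  leib_hom f /\ bijective f.

Definition leib_isomorphic (g h : leibniz K) := exists f : g -> h, leib_iso f.

(* q together with pi is (a model of) the quotient g / I:
   pi is a surjective homomorphism with kernel I *)
Definition quotient_map (g : leibniz K) (I : g -> Prop) (q : leibniz K)
  (pi : g -> q) :=
  leib_hom pi /\ (forall y : q, exists x, pi x = y) /\
  (forall x, pi x = 0 <-> I x).

Unset Implicit Arguments.
Fixpoint lieNest (g : leibniz K) (x : nat -> g) (k : nat) : g :=
  match k with
  | 0 => x 0%N
  | S j => lie (lieNest g x j) (x k)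
  end.
Set Implicit Arguments.
Arguments lieNest {g} x k.

(* xi is an isomorphism of Leibniz algebras from the ideal A of g onto the
   ideal B of h (only its values on A matter) *)
Definition iso_on (g h : leibniz K) (A : g -> Prop) (B : h -> Prop)
  (xi : g -> h) :=
  (forall (a : K) (x y : g), A x -> A y -> xi (a *: x + y) = a *: xi x + xi y) /\
  (forall x y : g, A x -> A y -> xi (lbr x y) = lbr (xi x) (xi y)) /\
  (forall x, A x -> B (xi x)) /\
  (forall x y, A x -> A y -> xi x = xi y -> x = y) /\
  (forall z, B z -> exists x, A x /\ xi x = z).

Definition Lie_isoclinic (n : nat) (g1 g2 : leibniz K) :=
  exists (q1 q2 : leibniz K) (pi1 : g1 -> q1) (pi2 : g2 -> q2)
         (eta : q1 -> q2) (xi : g1 -> g2),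
    quotient_map (ZLie g1 n) pi1 /\ quotient_map (ZLie g2 n) pi2 /\
    leib_iso eta /\ iso_on (gammaLie g1 n.+1) (gammaLie g2 n.+1) xi /\
    forall (x : nat -> g1) (y : nat -> g2),
      (forall i, (i <= n)%N -> eta (pi1 (x i)) = pi2 (y i)) ->
      xi (lieNest x n) = lieNest y n.

End Defs.
Arguments gammaLie {K} g i.
Arguments ZLie {K} g i.

(* If Φ(g) = 0 then Z_1^Lie(g) ∩ γ_2^Lie(g) = 0: since γ_2 lies in the right
   annihilator, a Lie-central element x of γ_2 is central, so for a maximal
   subalgebra M missing x we would get M + Kx = g, making M an ideal that
   contains γ_2 ∋ x.  Hence Z_k^Lie = Z_1^Lie for k ≥ 1 and
   Z_n^Lie ∩ γ_{n+1}^Lie = 0, so g → g/Z_n^Lie is injective on γ_{n+1}^Lie;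
   this gives the n-Lie-isoclinism of g and g/Z_n^Lie, which has trivial Z_n^Lie
   and is therefore n-Lie-stem.  Conversely, if h is n-Lie-stem and
   n-Lie-isoclinic to g, every element of γ_{n+1}^Lie(h) is a combination of
   iterated brackets, on which the isoclinism ξ is prescribed; this lets ξ carry
   Z_n^Lie(h) ⊆ γ_{n+1}^Lie(h) into Z_n^Lie(g) ∩ γ_{n+1}^Lie(g) = 0, so
   h ≅ h/Z_n^Lie(h) ≅ g/Z_n^Lie(g). *)

From HB Require Import structures.
From mathcomp Require Import all_boot all_order all_algebra.
From Stdlib Require Import ClassicalEpsilon.
Set Implicit Arguments. Unset Strict Implicit. Unset Printing Implicit Defensive.
Import GRing.Theory.
Local Open Scope ring_scope.

Local Notation nest x k := (lieNest _ _ x k).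

Section LeibnizAlgebra.
Variables (K : fieldType) (g : leibniz K).
Implicit Types (x y z u v c : g) (I T : g -> Prop).

Lemma brDl x y z : lbr (x + y) z = lbr x z + lbr y z.
Proof. by have := lbr_linl 1 x y z; rewrite !scale1r. Qed.

Lemma brDr x y z : lbr z (x + y) = lbr z x + lbr z y.
Proof. by have := lbr_linr 1 x y z; rewrite !scale1r. Qed.

Lemma br0l z : lbr 0 z = 0.
Proof. by apply: (addrI (lbr 0 z)); rewrite -brDl !addr0. Qed.

Lemma br0r z : lbr z 0 = 0.
Proof. by apply: (addrI (lbr z 0)); rewrite -brDr !addr0. Qed.

Lemma brZl a x z : lbr (a *: x) z = a *: lbr x z.
Proof. by have := lbr_linl a x 0 z; rewrite addr0 br0l addr0. Qed.

Lemma brZr a x z : lbr z (a *: x) = a *: lbr z x.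
Proof. by have := lbr_linr a x 0 z; rewrite addr0 br0r addr0. Qed.

Lemma lieDl x y z : lie (x + y) z = lie x z + lie y z.
Proof. by rewrite /lie brDl brDr addrACA. Qed.

Lemma lieZl a x z : lie (a *: x) z = a *: lie x z.
Proof. by rewrite /lie brZl brZr scalerDr. Qed.

Lemma lie0l z : lie 0 z = 0.
Proof. by rewrite /lie br0l br0r addr0. Qed.

(* By the Leibniz identity right multiplication is a derivation of the
   bracket, hence also of its symmetrization. *)
Lemma lbr_lie u v c : lbr (lie u v) c = lie (lbr u c) v + lie u (lbr v c).
Proof.
have expand x y : lbr (lbr x y) c = lbr x (lbr y c) + lbr (lbr x c) y.
  by rewrite lbr_leibniz subrK.
by rewrite /lie brDl !expand [RHS]addrACA [lbr (lbr u c) v + _]addrC.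
Qed.

Definition rann : g -> Prop := fun z => forall y, lbr y z = 0.

Lemma rann_lie x y : rann (lie x y).
Proof. by move=> w; rewrite /lie brDr !lbr_leibniz addrA subrK subrr. Qed.

Lemma idealD I x y : ideal I -> I x -> I y -> I (x + y).
Proof. by case=> [[_ hI] _] hx hy; have := hI 1 x y hx hy; rewrite scale1r. Qed.

Lemma idealZ I a x : ideal I -> I x -> I (a *: x).
Proof. by case=> [[hI0 hI] _] hx; have := hI a x 0 hx hI0; rewrite addr0. Qed.

Lemma idealB I x y : ideal I -> I x -> I y -> I (x - y).
Proof. by move=> hI hx hy; rewrite -scaleN1r; apply: idealD (idealZ _ _ _). Qed.

Lemma idealbrl I x y : ideal I -> I x -> I (lbr x y).
Proof. by case=> _ hI hx; case: (hI x y hx). Qed.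

Lemma idealbrr I x y : ideal I -> I x -> I (lbr y x).
Proof. by case=> _ hI hx; case: (hI x y hx). Qed.

Lemma ideal_lie I x y : ideal I -> I x -> I (lie x y).
Proof. by move=> hI hx; apply: idealD (idealbrl _ _ _) (idealbrr _ _ _). Qed.

Lemma rann_ideal : ideal rann.
Proof.
split; first split.
- by move=> y; rewrite br0r.
- by move=> a x y hx hy w; rewrite brDr brZr hx hy scaler0 addr0.
move=> x y hx; split=> w; last by rewrite hx br0r.
by rewrite lbr_leibniz !hx br0l subrr.
Qed.

Lemma gen_ideal_ideal T : ideal (gen_ideal T).
Proof.
split; first split.
- by move=> I [[]].
- move=> a x y hx hy I hI hT; case: (hI) => [[_ hIc] _].
  by apply: hIc; [apply: hx | apply: hy].
move=> x y hx; split=> I hI hT.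
  by apply: idealbrl; apply: hx.
by apply: idealbrr; apply: hx.
Qed.

Lemma gen_ideal_sub T t : T t -> gen_ideal T t.
Proof. by move=> ht I _; apply. Qed.

Lemma gen_ideal_min T I : ideal I -> (forall t, T t -> I t) ->
  forall x, gen_ideal T x -> I x.
Proof. by move=> hI hT x; apply. Qed.

Lemma gammaSS k : gammaLie g k.+2 = lie_comm (gammaLie g k.+1) (fun _ => True).
Proof. by []. Qed.

Lemma gamma_ideal k : ideal (gammaLie g k).
Proof.
by case: k => [|[|k]]; [split; first split.. | exact: gen_ideal_ideal].
Qed.

Lemma gamma0 k : gammaLie g k 0.
Proof. by case: (gamma_ideal k) => [[]]. Qed.

Lemma gamma_lie k x y : gammaLie g k.+1 x -> gammaLie g k.+2 (lie x y).
Proof. by move=> hx; apply: gen_ideal_sub; exists x, y. Qed.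

Lemma gamma2_lie x y : gammaLie g 2 (lie x y).
Proof. exact: gamma_lie. Qed.

Lemma gammaS_sub k x : gammaLie g k.+1 x -> gammaLie g k x.
Proof.
case: k x => [//|k] x; apply: gen_ideal_min (gamma_ideal k.+1) _ x.
by move=> _ [m [y [hm [_ ->]]]]; apply: ideal_lie hm; apply: gamma_ideal.
Qed.

Lemma gamma_sub2 k x : gammaLie g k.+2 x -> gammaLie g 2 x.
Proof. by elim: k x => [//|k IH] x /gammaS_sub /IH. Qed.

Lemma gamma2_rann x : gammaLie g 2 x -> rann x.
Proof.
by apply: gen_ideal_min rann_ideal _ x => _ [m [y [_ [_ ->]]]]; apply: rann_lie.
Qed.

Lemma ZLie0 k : ZLie g k 0.
Proof. by elim: k => [//|k IH] /= y; rewrite lie0l. Qed.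

Lemma eq_lieNest (x x' : nat -> g) k :
  (forall i, (i <= k)%N -> x i = x' i) -> nest x k = nest x' k.
Proof.
elim: k => [|k IH] h /=; first exact: h.
by rewrite IH ?h // => i hi; apply/h/leqW.
Qed.

Lemma lieNest_snoc (x : nat -> g) k c :
  lie (nest x k) c = nest (fun i => if i == k.+1 then c else x i) k.+1.
Proof.
by rewrite /= eqxx; congr lie; apply: eq_lieNest => i ik; rewrite ltn_eqF.
Qed.

Lemma lieNest_gamma (x : nat -> g) k : gammaLie g k.+1 (nest x k).
Proof. by elim: k => [//|k IH] /=; apply: gamma_lie. Qed.

End LeibnizAlgebra.

Section Homomorphism.
Variables (K : fieldType) (g h : leibniz K) (f : g -> h).
Hypothesis hf : leib_hom f.

Lemma homD x y : f (x + y) = f x + f y.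
Proof. by case: hf => hl _; have := hl 1 x y; rewrite !scale1r. Qed.

Lemma hom0 : f 0 = 0.
Proof. by apply: (addrI (f 0)); rewrite -homD !addr0. Qed.

Lemma homZ a x : f (a *: x) = a *: f x.
Proof. by case: hf => hl _; have := hl a x 0; rewrite !addr0 hom0 addr0. Qed.

Lemma homB x y : f (x - y) = f x - f y.
Proof. by rewrite -scaleN1r homD homZ scaleN1r. Qed.

Lemma hombr x y : f (lbr x y) = lbr (f x) (f y).
Proof. by case: hf. Qed.

Lemma hom_lie x y : f (lie x y) = lie (f x) (f y).
Proof. by rewrite /lie homD !hombr. Qed.

Lemma hom_lieNest (x : nat -> g) (y : nat -> h) k :
  (forall i, (i <= k)%N -> f (x i) = y i) -> f (nest x k) = nest y k.
Proof.
elim: k => [|k IH] hxy /=; first exact: hxy.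
by rewrite hom_lie IH ?hxy // => i hi; apply/hxy/leqW.
Qed.

Lemma hom_gamma k x : gammaLie g k x -> gammaLie h k (f x).
Proof.
elim: k x => [//|[//|k] IH] x; rewrite gammaSS => hx.
have hI := gamma_ideal h k.+2.
have hP : ideal (fun x => gammaLie h k.+2 (f x)).
  split; first split.
  - by rewrite hom0; apply: gamma0.
  - by move=> a u v hu hv; rewrite homD homZ; apply: idealD (idealZ _ _ _) hv.
  - move=> u v hu; rewrite !hombr.
    by split; [exact: idealbrl hI hu | exact: idealbrr hI hu].
apply: (gen_ideal_min hP) hx => _ [m [y [hm [_ ->]]]].
by rewrite hom_lie; apply: gamma_lie; apply: IH.
Qed.

Hypothesis f_surj : forall y : h, exists x, f x = y.

Lemma surj_hom_gamma k y :
  gammaLie h k y -> exists2 x, gammaLie g k x & f x = y.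
Proof.
elim: k y => [|[|k] IH] y; [by have [x] := f_surj y; exists x.. |].
rewrite gammaSS => hy.
have hI := gamma_ideal g k.+2.
have hP : ideal (fun y => exists2 x, gammaLie g k.+2 x & f x = y).
  split; first split.
  - by exists 0; [apply: gamma0 | apply: hom0].
  - move=> a _ _ [u hu <-] [v hv <-]; exists (a *: u + v).
      exact: idealD (idealZ _ _ _) hv.
    by rewrite homD homZ.
  - move=> _ y' [u hu <-]; have [v <-] := f_surj y'.
    by split; [exists (lbr u v) | exists (lbr v u)];
      rewrite ?hombr //; [exact: idealbrl hI hu | exact: idealbrr hI hu].
apply: (gen_ideal_min hP) hy => _ [_ [y' [/IH [x hx <-] [_ ->]]]].
have [v <-] := f_surj y'.
by exists (lie x v); [apply: gamma_lie | rewrite hom_lie].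
Qed.

End Homomorphism.

Lemma exists_section (A B : Type) (a0 : A) (f : A -> B) (P : B -> Prop)
    (Q : A -> Prop) :
  (forall y, P y -> exists2 x, Q x & f x = y) ->
  exists s : B -> A, forall y, P y -> Q (s y) /\ f (s y) = y.
Proof.
move=> hf; exists (fun y => epsilon (inhabits a0) (fun x => Q x /\ f x = y)).
move=> y /hf [x hQ hx].
by apply: (epsilon_spec (inhabits a0) (fun x => Q x /\ f x = y)); exists x.
Qed.

Lemma surj_section (A B : Type) (a0 : A) (f : A -> B) :
  (forall y, exists x, f x = y) -> exists s : B -> A, cancel s f.
Proof.
move=> hf; have /(exists_section a0) [s hs] :
    forall y, True -> exists2 x : A, True & f x = y.
  by move=> y _; have [x] := hf y; exists x.
by exists s => y; case: (hs y I).
Qed.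

Section Isomorphism.
Variable K : fieldType.
Implicit Types g h q : leibniz K.

Lemma inj_surj_leib_iso g h (f : g -> h) : leib_hom f ->
  (forall x, f x = 0 -> x = 0) -> (forall y, exists x, f x = y) -> leib_iso f.
Proof.
move=> hf hker hsurj; split=> //.
have [s fK] := surj_section 0 hsurj.
have f_inj : injective f.
  by move=> x x' e; apply: subr0_eq; apply: hker; rewrite (homB hf) e subrr.
by exists s => // x; apply: f_inj.
Qed.

Lemma leib_iso_surj g h (f : g -> h) :
  leib_iso f -> forall y, exists x, f x = y.
Proof. by case=> _ [f' _ fK] y; exists (f' y). Qed.

Lemma leib_isomorphic_trans g h q :
  leib_isomorphic g h -> leib_isomorphic h q -> leib_isomorphic g q.
Proof.
move=> [f1 [[hl1 hb1] bij1]] [f2 [[hl2 hb2] bij2]].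
exists (f2 \o f1); split; last exact: bij_comp.
by split=> [a x y | x y] /=; rewrite ?hl1 ?hl2 ?hb1 ?hb2.
Qed.

Lemma iso_on0 g h (A : g -> Prop) (B : h -> Prop) (xi : g -> h) :
  ideal A -> iso_on A B xi -> xi 0 = 0.
Proof.
case=> [[A0 _] _] [xi_lin _]; apply: (addrI (xi 0)).
by have := xi_lin 1 0 0 A0 A0; rewrite !scale1r !addr0 => <-.
Qed.

Section QuotientMap.
Variables (g q : leibniz K) (I : g -> Prop) (pi : g -> q).
Hypothesis hpi : quotient_map I pi.

Lemma quotient_map_hom : leib_hom pi.
Proof. by case: hpi. Qed.

Lemma quotient_map_surj y : exists x, pi x = y.
Proof. by case: hpi => _ []. Qed.

Lemma quotient_map_ker x : pi x = 0 <-> I x.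
Proof. by case: hpi => _ []. Qed.

Lemma quotient_map_eq x x' : pi x = pi x' <-> I (x - x').
Proof.
rewrite -quotient_map_ker (homB quotient_map_hom).
by split=> [-> | /subr0_eq //]; rewrite subrr.
Qed.

Lemma quotient_map_ker0_iso : (forall x, I x -> x = 0) -> leib_iso pi.
Proof.
move=> hI; apply: inj_surj_leib_iso quotient_map_hom _ quotient_map_surj.
by move=> x /quotient_map_ker /hI.
Qed.

End QuotientMap.

Lemma quotient_map_isomorphic g q q' (I : g -> Prop) (pi : g -> q)
    (pi' : g -> q') :
  quotient_map I pi -> quotient_map I pi' -> leib_isomorphic q q'.
Proof.
move=> hpi hpi'.
have hom := quotient_map_hom hpi; have hom' := quotient_map_hom hpi'.
have [s pi_s] := surj_section 0 (quotient_map_surj hpi).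
have pi'_eq x x' : pi x = pi x' -> pi' x = pi' x'.
  by move=> /(quotient_map_eq hpi) /(quotient_map_eq hpi').
exists (pi' \o s); apply: inj_surj_leib_iso.
- split=> [a x y | x y] /=.
    by rewrite -(homZ hom') -(homD hom'); apply: pi'_eq;
      rewrite (homD hom) (homZ hom) !pi_s.
  by rewrite -(hombr hom'); apply: pi'_eq; rewrite (hombr hom) !pi_s.
- by move=> x /= /(quotient_map_ker hpi') /(quotient_map_ker hpi); rewrite pi_s.
- move=> y; have [x <-] := quotient_map_surj hpi' y.
  by exists (pi x); apply: pi'_eq; rewrite pi_s.
Qed.
End Isomorphism.

Section CentralElement.
Variables (K : fieldType) (g : leibniz K) (x : g).
Hypotheses (brxl : forall y, lbr x y = 0) (brxr : forall y, lbr y x = 0).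

Definition adjoin (M : g -> Prop) : g -> Prop :=
  fun y => exists m a, M m /\ y = m + a *: x.

Lemma br_adjoinl m a y : lbr (m + a *: x) y = lbr m y.
Proof. by rewrite brDl brZl brxl scaler0 addr0. Qed.

Lemma br_adjoinr m a y : lbr y (m + a *: x) = lbr y m.
Proof. by rewrite brDr brZr brxr scaler0 addr0. Qed.

Lemma subalgebra_adjoin M : subalgebra M -> subalgebra (adjoin M).
Proof.
case=> [[M0 MD] Mbr]; split; first split.
- by exists 0, 0; rewrite scale0r addr0.
- move=> a _ _ [m1 [b1 [h1 ->]]] [m2 [b2 [h2 ->]]].
  exists (a *: m1 + m2), (a * b1 + b2); split; first exact: MD.
  by rewrite scalerDr scalerDl scalerA addrACA.
- move=> _ _ [m1 [b1 [h1 ->]]] [m2 [b2 [h2 ->]]].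
  exists (lbr m1 m2), 0; split; first exact: Mbr.
  by rewrite br_adjoinl br_adjoinr scale0r addr0.
Qed.

(* Every bracket of [g = M + Kx] is a bracket of [M], so [M] is an ideal. *)
Lemma adjoin_full_gamma2 M : subalgebra M -> (forall y, adjoin M y) ->
  forall z, gammaLie g 2 z -> M z.
Proof.
case=> [hM Mbr] Mx.
have br_M y y' : exists m m', [/\ M m, M m' & lbr y y' = lbr m m'].
  have [m [a [hm ->]]] := Mx y; have [m' [a' [hm' ->]]] := Mx y'.
  by exists m, m'; rewrite br_adjoinl br_adjoinr.
have M_ideal : ideal M.
  split=> // m y _; have [m1 [m2 [h1 h2 ->]]] := br_M m y.
  have [m3 [m4 [h3 h4 ->]]] := br_M y m.
  by split; apply: Mbr.
move=> z hz; apply: (gen_ideal_min M_ideal) hz => _ [y [y' [_ [_ ->]]]].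
rewrite /lie.
have [m1 [m2 [h1 h2 ->]]] := br_M y y'; have [m3 [m4 [h3 h4 ->]]] := br_M y' y.
by apply: idealD M_ideal (Mbr _ _ h1 h2) (Mbr _ _ h3 h4).
Qed.

Lemma central_gamma2_Frattini : gammaLie g 2 x -> Frattini x.
Proof.
move=> x_gamma M [hM [_ Mmax]]; apply: NNPP => Mx.
case: (Mmax _ (subalgebra_adjoin hM)).
- by move=> m hm; exists m, 0; rewrite scale0r addr0.
- move=> /(_ x) e; apply/Mx/e; exists 0, 1.
  by rewrite scale1r add0r; case: hM => [[]].
by move=> /(adjoin_full_gamma2 hM)/(_ x x_gamma).
Qed.

End CentralElement.

Lemma Lie_central_gamma2_Frattini (K : fieldType) (g : leibniz K) (x : g) :
  (forall y, lie x y = 0) -> gammaLie g 2 x -> Frattini x.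
Proof.
move=> xZ x_gamma; have xr := gamma2_rann x_gamma.
have xl y : lbr x y = 0 by have := xZ y; rewrite /lie xr addr0.
exact: central_gamma2_Frattini xl xr x_gamma.
Qed.

Section LieCenterMeetsDerived.
Variables (K : fieldType) (g : leibniz K).
Hypothesis Z1_gamma2 :
  forall x : g, (forall y, lie x y = 0) -> gammaLie g 2 x -> x = 0.

Lemma ZLieS_center k x : ZLie g k.+1 x <-> forall y, lie x y = 0.
Proof.
elim: k x => [//|k IH] x /=; split=> [xZ y | xZ y].
  by apply: Z1_gamma2 (gamma2_lie _ _); apply/IH; apply: xZ.
by apply/IH => w; rewrite xZ lie0l.
Qed.

Lemma ZLie_gamma_trivial n x : ZLie g n x -> gammaLie g n.+1 x -> x = 0.
Proof. by case: n => [//|k] /ZLieS_center xZ /gamma_sub2; apply: Z1_gamma2. Qed.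

End LieCenterMeetsDerived.

Lemma quotient_ZLie_trivial (K : fieldType) (g q : leibniz K) n (pi : g -> q) :
  (forall x : g, (forall y, lie x y = 0) -> gammaLie g 2 x -> x = 0) ->
  quotient_map (ZLie g n) pi -> forall x : q, ZLie q n x -> x = 0.
Proof.
case: n => [//|k] Z1_gamma2 hpi.
have Z1q (z : q) : (forall y, lie z y = 0) -> z = 0.
  have [w <-] := quotient_map_surj hpi z; move=> wZ.
  apply/(quotient_map_ker hpi)/(ZLieS_center Z1_gamma2) => v.
  apply: (Z1_gamma2 _ _ (gamma2_lie _ _)); apply/(ZLieS_center Z1_gamma2 k).
  by apply/(quotient_map_ker hpi); rewrite (hom_lie (quotient_map_hom hpi)) wZ.
by move=> x /(ZLieS_center (fun z zZ _ => Z1q z zZ)); apply: Z1q.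
Qed.

Lemma quotient_gamma_iso_on (K : fieldType) (g q : leibniz K) (I : g -> Prop)
    (pi : g -> q) k :
  quotient_map I pi -> (forall x, I x -> gammaLie g k x -> x = 0) ->
  exists xi : q -> g, iso_on (gammaLie q k) (gammaLie g k) xi /\
    forall x, gammaLie g k x -> xi (pi x) = x.
Proof.
move=> hpi I_gamma; have hom := quotient_map_hom hpi; have G_ideal := gamma_ideal g k.
have [xi xi_spec] :=
  exists_section 0 (surj_hom_gamma hom (quotient_map_surj hpi) (k := k)).
have pi_inj x x' : gammaLie g k x -> gammaLie g k x' -> pi x = pi x' -> x = x'.
  move=> hx hx' /(quotient_map_eq hpi) /I_gamma e.
  by apply: subr0_eq; apply: e; apply: idealB.
have xi_pi x : gammaLie g k x -> xi (pi x) = x.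
  by move=> hx; have [hx' e] := xi_spec _ (hom_gamma hom hx); apply: pi_inj.
exists xi; split=> //; split; [|split; [|split; [|split]]].
- move=> a y y' /xi_spec [hx <-] /xi_spec [hx' <-].
  rewrite -(homZ hom) -(homD hom) !xi_pi //.
  exact: idealD (idealZ _ _ _) hx'.
- move=> y y' /xi_spec [hx <-] /xi_spec [hx' <-].
  by rewrite -(hombr hom) !xi_pi //; apply: idealbrl.
- by move=> y /xi_spec [].
- by move=> y y' /xi_spec [_ e] /xi_spec [_ e'] exy; rewrite -e -e' exy.
- by move=> x hx; exists (pi x); split; [apply: hom_gamma | apply: xi_pi].
Qed.

Lemma quotient_Lie_isoclinic (K : fieldType) (g q : leibniz K) n (pi : g -> q) :
  quotient_map (ZLie g n) pi ->
  (forall x, ZLie g n x -> gammaLie g n.+1 x -> x = 0) ->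
  (forall x : q, ZLie q n x -> x = 0) -> Lie_isoclinic n q g.
Proof.
move=> hpi Z_gamma Zq.
have [xi [xi_iso xi_pi]] := quotient_gamma_iso_on hpi Z_gamma.
exists q, q, id, pi, id, xi; split; [|split; [|split; [|split]]] => //.
- split; first by split.
  by split=> [y | x]; [exists y | split=> [-> | /Zq //]; apply: ZLie0].
- by split; [split | exists id].
move=> x y xy; rewrite -(hom_lieNest (quotient_map_hom hpi) (x := y) (y := x)).
  exact/xi_pi/lieNest_gamma.
by move=> i /xy.
Qed.

Section PairedSpan.
Variables (K : fieldType) (h g q1 q2 : leibniz K).
Variables (pi1 : h -> q1) (pi2 : g -> q2) (eta : q1 -> q2).
Hypotheses (hom1 : leib_hom pi1) (hom2 : leib_hom pi2) (hom_eta : leib_hom eta).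

Definition paired (c : h) (d : g) := eta (pi1 c) = pi2 d.

(* [paired_span k u v]: [u] and [v] are the same linear combination of
   iterated brackets of length [k+1] whose entries are paired; an
   isoclinism is forced to map [u] to [v]. *)
Inductive paired_span (k : nat) : h -> g -> Prop :=
| paired_span_nest (x : nat -> h) (y : nat -> g) :
    (forall i, (i <= k)%N -> paired (x i) (y i)) ->
    paired_span k (nest x k) (nest y k)
| paired_span0 : paired_span k 0 0
| paired_span_comb a u v u' v' : paired_span k u v -> paired_span k u' v' ->
    paired_span k (a *: u + u') (a *: v + v').

Lemma paired_spanD k u v u' v' :
  paired_span k u v -> paired_span k u' v' -> paired_span k (u + u') (v + v').
Proof. by move=> s s'; have := paired_span_comb 1 s s'; rewrite !scale1r. Qed.

Lemma paired_br c d c' d' :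
  paired c d -> paired c' d' -> paired (lbr c c') (lbr d d').
Proof.
by rewrite /paired (hombr hom1) (hombr hom_eta) (hombr hom2) => -> ->.
Qed.

Lemma paired_span_lie k u v c d :
  paired_span k u v -> paired c d -> paired_span k.+1 (lie u c) (lie v d).
Proof.
move=> s cd; elim: s => [x y xy | | a u1 v1 u2 v2 _ IH1 _ IH2].
- rewrite !lieNest_snoc; apply: paired_span_nest => i.
  by case: ltngtP => // ik _; apply: xy.
- by rewrite !lie0l; apply: paired_span0.
- by rewrite !lieDl !lieZl; apply: paired_span_comb.
Qed.

Lemma paired_span_br k u v c d :
  paired_span k u v -> paired c d -> paired_span k (lbr u c) (lbr v d).
Proof.
elim: k u v => [|k IHk] u v s cd;
  elim: s => [x y xy | | a u1 v1 u2 v2 _ IH1 _ IH2].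
- have := @paired_span_nest 0 (fun _ => lbr (x 0%N) c) (fun _ => lbr (y 0%N) d).
  by apply=> i _; apply: paired_br (xy 0%N (leqnn 0)) cd.
- by rewrite !br0l; apply: paired_span0.
- by rewrite !brDl !brZl; apply: paired_span_comb.
- have xy' : forall i, (i <= k)%N -> paired (x i) (y i) by move=> i /leqW /xy.
  rewrite /= !lbr_lie; apply: paired_spanD; apply: paired_span_lie.
  + exact: IHk (paired_span_nest xy') cd.
  + exact: xy.
  + exact: paired_span_nest xy'.
  + exact: paired_br (xy _ _) cd.
- by rewrite !br0l; apply: paired_span0.
- by rewrite !brDl !brZl; apply: paired_span_comb.
Qed.

Lemma paired_span_gamma k u v : paired_span k u v -> gammaLie h k.+1 u.
Proof.
elim=> [x y _ | | a u1 v1 u2 v2 _ IH1 _ IH2]; first exact: lieNest_gamma.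
  exact: gamma0.
exact: idealD (gamma_ideal _ _) (idealZ _ (gamma_ideal _ _) IH1) IH2.
Qed.

Hypothesis pi2_surj : forall z : q2, exists y, pi2 y = z.

Lemma paired_total c : exists d, paired c d.
Proof. by have [d] := pi2_surj (eta (pi1 c)); exists d. Qed.

(* Right brackets with a fixed element preserve paired spans, and left
   brackets with elements of [γ_2] vanish. *)
Lemma gamma_paired_span k u :
  gammaLie h k.+1 u -> exists v, paired_span k u v.
Proof.
elim: k u => [|k IH] u hu.
  have [d cd] := paired_total u.
  by exists (nest (fun _ => d) 0); apply: (@paired_span_nest 0 (fun _ => u)).
have hP : ideal (fun u => exists v, paired_span k.+1 u v).
  split; first split.
  - by exists 0; apply: paired_span0.
  - move=> a x y [v s] [v' s'].
    by exists (a *: v + v'); apply: paired_span_comb.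
  - move=> x y [v s]; have [d yd] := paired_total y; split.
      by exists (lbr v d); apply: paired_span_br.
    rewrite (gamma2_rann (gamma_sub2 (paired_span_gamma s))).
    by exists 0; apply: paired_span0.
apply: (gen_ideal_min hP) hu => _ [m [y [/IH [v s] [_ ->]]]].
by have [d yd] := paired_total y; exists (lie v d); apply: paired_span_lie.
Qed.

Variables (k : nat) (xi : h -> g).
Hypothesis xi_iso : iso_on (gammaLie h k.+2) (gammaLie g k.+2) xi.
Hypothesis xi_nest : forall (x : nat -> h) (y : nat -> g),
  (forall i, (i <= k.+1)%N -> eta (pi1 (x i)) = pi2 (y i)) ->
  xi (nest x k.+1) = nest y k.+1.
Hypotheses (pi1_surj : forall z : q1, exists c, pi1 c = z)
  (eta_surj : forall z : q2, exists z', eta z' = z).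

Lemma paired_onto d : exists c, paired c d.
Proof.
rewrite /paired; have [z <-] := eta_surj (pi2 d).
by have [c <-] := pi1_surj z; exists c.
Qed.

Lemma xi_paired_span u v : paired_span k.+1 u v -> xi u = v.
Proof.
elim=> [x y /xi_nest // | | a u1 v1 u2 v2 s1 IH1 s2 IH2].
  exact: iso_on0 (gamma_ideal _ _) xi_iso.
case: xi_iso => xi_lin _.
by rewrite xi_lin ?IH1 ?IH2 //; apply: paired_span_gamma; eassumption.
Qed.

Lemma xi_lie u c d : gammaLie h k.+2 u -> paired c d ->
  xi (lie u c) = lie (xi u) d.
Proof.
move=> hu cd; have [v s] := gamma_paired_span hu.
have [_ [_ [xi_gamma _]]] := xi_iso.
have u_rann := gamma2_rann (gamma_sub2 hu).
have xiu_rann := gamma2_rann (gamma_sub2 (xi_gamma _ hu)).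
rewrite /lie u_rann xiu_rann !addr0 (xi_paired_span s).
exact/xi_paired_span/paired_span_br.
Qed.

Lemma xi_ZLie j x : ZLie h j x -> gammaLie h k.+2 x -> ZLie g j (xi x).
Proof.
elim: j x => [|j IH] x xZ hx.
  by move: xZ => /= ->; rewrite (iso_on0 (gamma_ideal _ _) xi_iso).
move=> d; have [c cd] := paired_onto d.
rewrite -(xi_lie hx cd).
exact: IH (xZ c) (ideal_lie c (gamma_ideal _ _) hx).
Qed.

End PairedSpan.

Lemma stem_Lie_isoclinic_ZLie_trivial (K : fieldType) (g h : leibniz K) n :
  (forall x : g, ZLie g n x -> gammaLie g n.+1 x -> x = 0) ->
  Lie_stem n h -> Lie_isoclinic n h g -> forall x : h, ZLie h n x -> x = 0.
Proof.
case: n => [//|k] Z_gamma stem.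
move=> [q1 [q2 [pi1 [pi2 [eta [xi [hq1 [hq2 [heta [xi_iso xi_nest]]]]]]]]]].
move=> x xZ.
have x_gamma := stem x xZ; have [_ [_ [xi_gamma [xi_inj _]]]] := xi_iso.
apply: (xi_inj _ _ x_gamma (gamma0 _ _)).
rewrite (iso_on0 (gamma_ideal _ _) xi_iso).
apply: Z_gamma (xi_gamma _ x_gamma).
exact: (xi_ZLie (quotient_map_hom hq1) (quotient_map_hom hq2) (proj1 heta)
  (quotient_map_surj hq2) xi_iso xi_nest (quotient_map_surj hq1)
  (leib_iso_surj heta)) xZ x_gamma.
Qed.

Lemma Lie_isoclinic_isomorphic (K : fieldType) (g h q : leibniz K) n
    (pi : g -> q) :
  quotient_map (ZLie g n) pi -> (forall x : h, ZLie h n x -> x = 0) ->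
  Lie_isoclinic n h g -> leib_isomorphic h q.
Proof.
move=> hpi Zh [q1 [q2 [pi1 [pi2 [eta [_ [hq1 [hq2 [heta _]]]]]]]]].
apply: leib_isomorphic_trans (ex_intro _ pi1 (quotient_map_ker0_iso hq1 Zh)) _.
apply: leib_isomorphic_trans (ex_intro _ eta heta) _.
exact: quotient_map_isomorphic hq2 hpi.
Qed.

Theorem mainTheorem16 (K : fieldType) (hK : (2%:R : K) != 0) (n : nat)
  (g : leibniz K) (hPhi : forall x : g, Frattini x -> x = 0)
  (q : leibniz K) (pi : g -> q) (hq : quotient_map (ZLie g n) pi) :
  (Lie_stem n q /\ Lie_isoclinic n q g) /\
  (forall h : leibniz K, Lie_stem n h -> Lie_isoclinic n h g ->
     leib_isomorphic h q).
Proof.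
have Z1_gamma2 (x : g) : (forall y, lie x y = 0) -> gammaLie g 2 x -> x = 0.
  by move=> xZ x_gamma; apply: hPhi; apply: Lie_central_gamma2_Frattini.
have Z_gamma (x : g) : ZLie g n x -> gammaLie g n.+1 x -> x = 0.
  exact: ZLie_gamma_trivial.
have Zq := quotient_ZLie_trivial Z1_gamma2 hq.
split; first split.
- by move=> x /Zq ->; apply: gamma0.
- exact: quotient_Lie_isoclinic hq Z_gamma Zq.
move=> h stem iso; have Zh := stem_Lie_isoclinic_ZLie_trivial Z_gamma stem iso.
exact: Lie_isoclinic_isomorphic hq Zh iso.
Qed.
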